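(* Let $\mathcal{L}$ be a set of graphs of sort $\emptyset$, let $\tau\subseteq\mathbb{S}$ be finite and let $G_1,G_2$ be graphs of sort included in $\tau$. Then $G_1\cong^{\mathbf{G}}_{\mathcal{L}}G_2$ iff $G_1\cong^{\mathbf{G}^\tau}_{\mathcal{L}}G_2$.
   Context: Graphs over a countably infinite set $\mathbb{S}$ of source labels and a set $\mathbb{A}$ of edge labels: isomorphism classes of finite $\mathbb{A}$-labelled hypergraphs with an injective map from a finite sort into the vertices (sources). The HR algebra $\mathbf{G}$: sorts the finite subsets of $\mathbb{S}$; operations $\mathbf{0}_\sigma$, $\mathbf{a}_{(s_1,\ldots)}$, $\mathsf{restrict}_\sigma$ (forget source labels outside $\sigma$, keep vertices), $\mathsf{rename}_\alpha$ ($\alpha$ finite permutation of $\mathbb{S}$, relabelling sources), $\parallel$ (disjoint union fusing equally-labelled sources). $\mathbf{G}^\tau$: subalgebra with sorts the subsets of $\tau$, universe the graphs of sort $\subseteq\tau$, and operations $\mathbf{0}_\sigma$ ($\sigma\subseteq\tau$), $\mathbf{a}_{(s_1,\ldots)}$ ($s_i\in\tau$), $\mathsf{restrict}_\sigma$ ($\sigma\subseteq\tau$), $\mathsf{rename}_\alpha$ ($\alpha$ fixing all elements outside $\tau$), $\parallel$. The syntactic congruence $\cong^{\mathbf{A}}_{\mathcal{L}}$ in an algebra $\mathbf{A}$ relates elements $a,b$ of $\mathbf{A}$ iff they have the same sort and for every first-order term $t(x,y_1,\ldots,y_k)$ over the signature of $\mathbf{A}$ and all elements $c_i$ of $\mathbf{A}$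 of matching sorts, $t^{\mathbf{A}}(a,\bar c)\in\mathcal{L}\iff t^{\mathbf{A}}(b,\bar c)\in\mathcal{L}$. *)

From mathcomp Require Import all_boot.
From mathcomp Require Import finmap.
From Stdlib Require Import Permutation.

Set Implicit Arguments.
Unset Strict Implicit.
Unset Printing Implicit Defensive.



(* Source labels: S = nat (countably infinite).
   A concrete graph: a duplicate-free list of vertex names (nats), a list
   (multiset) of hyperedges, each an A-label with a list of attached
   vertices, and a list of (source label, vertex) pairs. *)
Section Graphs.
Variable A : Type.

Record graph := Graph {
  verts : seq nat;
  edges : seq (A * seq nat);
  src   : seq (nat * nat)
}.

(* well-formedness: the concrete data really is a finite hypergraph with an
   injective source map from a finite set of labels into the vertices *)
Definition wf_graph (G : graph) : Prop :=
  [/\ uniq (verts G),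
      all (fun e => all (fun v => v \in verts G) e.2) (edges G),
      all (fun p => p.2 \in verts G) (src G),
      uniq (map fst (src G)) &
      uniq (map snd (src G))].

Definition gsort (G : graph) : {fset nat} := [fset x | x in map fst (src G)]%fset.

Definition iso (G H : graph) : Prop :=
  exists f : nat -> nat,
    [/\ Permutation (map f (verts G)) (verts H),
        Permutation (map (fun e => (e.1, map f e.2)) (edges G)) (edges H) &
        Permutation (map (fun p => (p.1, f p.2)) (src G)) (src H)].

Definition g_zero (sigma : {fset nat}) : graph :=
  Graph (enum_fset sigma) [::] [seq (s, s) | s <- enum_fset sigma].

Definition g_edge (a : A) (s : seq nat) : graph :=
  Graph (undup s) [:: (a, s)] [seq (x, x) | x <- undup s].

Definition g_restrict (sigma : {fset nat}) (G : graph) : graph :=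
  Graph (verts G) (edges G) [seq p <- src G | p.1 \in sigma].

Definition g_rename (alpha : nat -> nat) (G : graph) : graph :=
  Graph (verts G) (edges G) [seq (alpha p.1, p.2) | p <- src G].

(* parallel composition: disjoint union fusing equally labelled sources *)
Definition src_vertex (G : graph) (s : nat) : option nat :=
  ohead [seq p.2 | p <- src G & p.1 == s].
Definition src_label (G : graph) (v : nat) : option nat :=
  ohead [seq p.1 | p <- src G & p.2 == v].

Definition g_par (G H : graph) : graph :=
  let off := (foldr maxn 0 (verts G)).+1 in
  let fuse v := obind (src_vertex G) (src_label H v) in
  let mv v := odflt (v + off) (fuse v) in
  Graph (verts G ++ [seq v + off | v <- verts H & ~~ isSome (fuse v)])
        (edges G ++ [seq (e.1, map mv e.2) | e <- edges H])
        (src G ++ [seq (p.1, mv p.2) | p <- src H & p.1 \notin gsort G]).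

Inductive term :=
  | TX
  | TY of nat
  | TZero of {fset nat}
  | TEdge of A & seq nat
  | TRestrict of {fset nat} & term
  | TRename of (nat -> nat) & term
  | TPar of term & term.

Fixpoint eval (x : graph) (y : nat -> graph) (t : term) : graph :=
  match t with
  | TX => x
  | TY i => y i
  | TZero sigma => g_zero sigma
  | TEdge a s => g_edge a s
  | TRestrict sigma t => g_restrict sigma (eval x y t)
  | TRename alpha t => g_rename alpha (eval x y t)
  | TPar t1 t2 => g_par (eval x y t1) (eval x y t2)
  end.

Definition finite_perm (alpha : nat -> nat) : Prop :=
  bijective alpha /\ exists N, forall n, N <= n -> alpha n = n.

Fixpoint term_G (t : term) : Prop :=
  match t with
  | TX | TY _ | TZero _ | TEdge _ _ => True
  | TRestrict _ t => term_G t
  | TRename alpha t => finite_perm alpha /\ term_G t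
  | TPar t1 t2 => term_G t1 /\ term_G t2
  end.

Fixpoint term_Gtau (tau : {fset nat}) (t : term) : Prop :=
  match t with
  | TX | TY _ => True
  | TZero sigma => (sigma `<=` tau)%fset
  | TEdge _ s => all (fun x => x \in tau) s
  | TRestrict sigma t => (sigma `<=` tau)%fset /\ term_Gtau tau t
  | TRename alpha t =>
      (finite_perm alpha /\ forall n, n \notin tau -> alpha n = n)
      /\ term_Gtau tau t
  | TPar t1 t2 => term_Gtau tau t1 /\ term_Gtau tau t2
  end.

Definition elem_G (G : graph) : Prop := wf_graph G.
Definition elem_Gtau (tau : {fset nat}) (G : graph) : Prop :=
  wf_graph G /\ (gsort G `<=` tau)%fset.

(* syntactic congruence of L in the algebra given by its admissible terms
   (Tm) and its universe (El) *)
Definition syn_cong (Tm : term -> Prop) (El : graph -> Prop)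
  (L : graph -> Prop) (a b : graph) : Prop :=
  gsort a = gsort b /\
  forall t, Tm t -> forall y : nat -> graph, (forall i, El (y i)) ->
    (L (eval a y t) <-> L (eval b y t)).

End Graphs.

(* One direction is immediate: G^tau-terms and G^tau-graphs are G-terms and G-graphs.
   Conversely, replacing the occurrences of x in a G-term one at a time reduces the claim to
   terms with a single occurrence of x. On graphs of a fixed sort sigma, such a one-hole
   context is isomorphic to restrict_r (rename_a x || C) for a finite permutation a and a
   graph C: restrictions and renamings are absorbed into r and a, and a closed parallel
   factor D is absorbed into C once the labels hidden by r have been renamed away from the
   sort of D. If the result lies in L its sort is empty, so it equals
   restrict_0 (x || restrict_sigma (rename_(a^-1) C)), a G^tau-term in x whose parameter has
   sort included in sigma, which is included in tau. *)

From mathcomp Require Import all_boot finmap zify.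
From Stdlib Require Import Permutation.

Set Implicit Arguments.
Unset Strict Implicit.
Unset Printing Implicit Defensive.

Lemma PermutationP (T : eqType) (s1 s2 : seq T) :
  reflect (Permutation s1 s2) (perm_eq s1 s2).
Proof.
apply: (iffP idP); last first.
  elim=> [|x l l' _ p|x y l|l l' l'' _ p1 _ p2] //.
  - by rewrite perm_cons.
  - by apply/permP => P /=; rewrite addnCA.
  - exact: seq.perm_trans p1 p2.
elim: s1 s2 => [|x s1 IH] s2 p; first by move: p; rewrite perm_sym => /perm_nilP ->.
have xs2 : x \in s2 by rewrite -(perm_mem p) mem_head.
case/splitPr: xs2 p => s2a s2b p.
apply: Permutation_trans (Permutation_middle _ _ _); constructor.
apply: IH; rewrite -(perm_cons x) (seq.perm_trans p) // perm_sym.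
by rewrite -cat1s -[s2a ++ x :: s2b]/(s2a ++ [:: x] ++ s2b) perm_catCA.
Qed.

Arguments PermutationP {T s1 s2}.

Lemma Permutation_map_seq (T U : Type) (f : T -> U) s1 s2 :
  Permutation s1 s2 -> Permutation (map f s1) (map f s2).
Proof.
have mapE s : List.map f s = map f s by elim: s => //= a s ->.
by move=> p; rewrite -!mapE; apply: Permutation_map.
Qed.

Lemma inj_in_uniq_map (T U : eqType) (f : T -> U) s :
  uniq (map f s) -> {in s &, injective f}.
Proof.
elim: s => //= a s IH /andP[na us] x y; rewrite !in_cons.
case/orP => [/eqP->|xs]; case/orP => [/eqP->|ys] e //.
- by move: na; rewrite e map_f.
- by move: na; rewrite -e map_f.
- exact: IH.
Qed.

Lemma uniq_map_filter (T U : eqType) (f : T -> U) (P : pred T) s :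
  uniq (map f s) -> uniq (map f (filter P s)).
Proof. by apply: subseq_uniq; apply: map_subseq; apply: filter_subseq. Qed.

Lemma eq_map_all (T U : Type) (P : pred T) (f g : T -> U) s :
  all P s -> (forall x, P x -> f x = g x) -> map f s = map g s.
Proof. by elim: s => //= a s IH /andP[pa ps] fg; rewrite fg // IH. Qed.

Lemma map_filter_eq (T : eqType) (U : Type) (f g : T -> U) (P Q : pred T) s :
  {in s, P =1 Q} -> {in s, f =1 g} -> map f (filter P s) = map g (filter Q s).
Proof.
move=> PQ fg; rewrite (eq_in_filter PQ); apply/eq_in_map => x.
by rewrite mem_filter => /andP[_]; apply: fg.
Qed.

Lemma ltn_foldr_maxn (s : seq nat) v : v \in s -> v < (foldr maxn 0 s).+1.
Proof.
rewrite ltnS; elim: s => //= a s IH; rewrite in_cons.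
by case/orP => [/eqP ->|/IH h]; rewrite leq_max ?leqnn // h orbT.
Qed.

Lemma map_fst_diag (s : seq nat) : [seq p.1 | p <- [seq (n, n) | n <- s]] = s.
Proof. by elim: s => //= n s ->. Qed.

Lemma map_snd_diag (s : seq nat) : [seq p.2 | p <- [seq (n, n) | n <- s]] = s.
Proof. by elim: s => //= n s ->. Qed.

(** * Parallel composition and well-formedness *)

Section Graphs.
Variable A : Type.
Notation graph := (graph A).
Implicit Types G H K C D x : graph.

Definition labels G := map fst (src G).
Definition src_verts G := map snd (src G).

Lemma in_gsort G l : (l \in gsort G) = (l \in labels G).
Proof. by rewrite inE. Qed.

Variant src_vertex_spec G l : option nat -> Prop :=
  | SrcVertexSome v of (l, v) \in src G : src_vertex_spec G l (Some v)
  | SrcVertexNone of l \notin labels G : src_vertex_spec G l None.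

Lemma src_vertexP G l : src_vertex_spec G l (src_vertex G l).
Proof.
case: G => V E S; rewrite /src_vertex /labels /=.
elim: S => [|[m w] S IH] /=; first by constructor.
case: eqP => [->|ne] /=; first by constructor; rewrite mem_head.
case: IH => [v lv|nl]; constructor; first by rewrite in_cons lv orbT.
by rewrite in_cons negb_or nl eq_sym andbT; apply/eqP.
Qed.

Variant src_label_spec G v : option nat -> Prop :=
  | SrcLabelSome l of (l, v) \in src G : src_label_spec G v (Some l)
  | SrcLabelNone of v \notin src_verts G : src_label_spec G v None.

Lemma src_labelP G v : src_label_spec G v (src_label G v).
Proof.
case: G => V E S; rewrite /src_label /src_verts /=.
elim: S => [|[m w] S IH] /=; first by constructor.
case: eqP => [->|ne] /=; first by constructor; rewrite mem_head.
case: IH => [l lv|nv]; constructor; first by rewrite in_cons lv orbT.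
by rewrite in_cons negb_or nv eq_sym andbT; apply/eqP.
Qed.

Lemma src_vertex_in G l v :
  wf_graph G -> (l, v) \in src G -> src_vertex G l = Some v.
Proof.
case=> _ _ _ uL _ lv; case: src_vertexP => [w lw|]; last by rewrite (map_f fst lv).
have /inj_in_uniq_map : uniq (map fst (src G)) by [].
by move=> /(_ _ _ lv lw erefl) [->].
Qed.

Lemma src_label_in G l v :
  wf_graph G -> (l, v) \in src G -> src_label G v = Some l.
Proof.
case=> _ _ _ _ uS lv; case: src_labelP => [m mv|]; last by rewrite (map_f snd lv).
have /inj_in_uniq_map : uniq (map snd (src G)) by [].
by move=> /(_ _ _ lv mv erefl) [->].
Qed.

Lemma src_vertex_notin G l : l \notin labels G -> src_vertex G l = None.
Proof. by case: src_vertexP => // v /(map_f fst) ->. Qed.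

Lemma src_in_verts G l v : wf_graph G -> (l, v) \in src G -> v \in verts G.
Proof. by case=> _ _ /allP h _ _ /h. Qed.

Definition par_off G := (foldr maxn 0 (verts G)).+1.
Definition par_fuse G H v := obind (src_vertex G) (src_label H v).
Definition par_inr G H v := odflt (v + par_off G) (par_fuse G H v).

Lemma ltn_par_off G v : v \in verts G -> v < par_off G.
Proof. exact: ltn_foldr_maxn. Qed.

Lemma verts_par G H :
  verts (g_par G H) = verts G ++ [seq v + par_off G | v <- verts H & ~~ par_fuse G H v].
Proof. by []. Qed.

Lemma edges_par G H :
  edges (g_par G H) = edges G ++ [seq (e.1, map (par_inr G H) e.2) | e <- edges H].
Proof. by []. Qed.

Lemma src_par G H : src (g_par G H) =
  src G ++ [seq (p.1, par_inr G H p.2) | p <- src H & p.1 \notin gsort G].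
Proof. by []. Qed.

Lemma par_fuse_src G H l v :
  wf_graph H -> (l, v) \in src H -> par_fuse G H v = src_vertex G l.
Proof. by move=> wH lv; rewrite /par_fuse (src_label_in wH lv). Qed.

Lemma par_fuse_nsrc G H v : v \notin src_verts H -> par_fuse G H v = None.
Proof. by rewrite /par_fuse; case: src_labelP => // l /(map_f snd) ->. Qed.

Lemma par_fuse_Some G H v w : par_fuse G H v = Some w ->
  exists l, (l, v) \in src H /\ (l, w) \in src G.
Proof.
rewrite /par_fuse; case: src_labelP => //= l lv.
by case: src_vertexP => // u lu [eu]; exists l; rewrite -eu.
Qed.

Lemma par_fuse_verts G H v w : wf_graph G -> par_fuse G H v = Some w -> w \in verts G.
Proof. by move=> wG /par_fuse_Some [l [_]]; apply: src_in_verts. Qed.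

Lemma par_fuse_sym G H v w : wf_graph G -> wf_graph H ->
  par_fuse H G v = Some w -> par_fuse G H w = Some v.
Proof.
move=> wG wH /par_fuse_Some [l [lv lw]].
by rewrite (par_fuse_src _ wH lw) (src_vertex_in wG lv).
Qed.

Lemma src_parE G H : wf_graph H -> src (g_par G H) =
  src G ++ [seq (p.1, p.2 + par_off G) | p <- src H & p.1 \notin gsort G].
Proof.
move=> wH; rewrite src_par; congr (_ ++ _); apply/eq_in_map => -[l v].
rewrite mem_filter /= => /andP[nl lv].
by rewrite /par_inr (par_fuse_src _ wH lv) src_vertex_notin -?in_gsort.
Qed.

Lemma mem_src_par G H l w : wf_graph H ->
  ((l, w) \in src (g_par G H)) = ((l, w) \in src G) ||
    [&& l \notin labels G, par_off G <= w & (l, w - par_off G) \in src H].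
Proof.
move=> wH; rewrite (src_parE _ wH) mem_cat; congr (_ || _).
apply/mapP/and3P => [[[l' v]]|[nl le lv]].
  by rewrite mem_filter -in_gsort /= => /andP[nl lv] [-> ->]; rewrite leq_addl addnK.
by exists (l, w - par_off G); rewrite ?mem_filter /= ?in_gsort ?nl ?lv ?subnK.
Qed.

Lemma mem_verts_par G H v : (v \in verts (g_par G H)) = (v \in verts G) ||
  [&& par_off G <= v, v - par_off G \in verts H & par_fuse G H (v - par_off G) == None].
Proof.
rewrite verts_par mem_cat; congr (_ || _).
apply/mapP/and3P => [[h]|[le vh /eqP fn]].
  by rewrite mem_filter => /andP[fn hH] ->; rewrite leq_addl addnK hH; case: par_fuse fn.
by exists (v - par_off G); rewrite ?mem_filter ?fn ?subnK.
Qed.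

Lemma labels_par G H :
  labels (g_par G H) = labels G ++ [seq p.1 | p <- src H & p.1 \notin gsort G].
Proof. by rewrite /labels src_par map_cat -map_comp. Qed.

Lemma mem_labels_par G H l :
  (l \in labels (g_par G H)) = (l \in labels G) || (l \in labels H).
Proof.
rewrite labels_par mem_cat; case: (boolP (l \in labels G)) => //= nl.
apply/mapP/mapP => [[p + ->]|[p pH el]]; first by rewrite mem_filter => /andP[_]; exists p.
by exists p => //; rewrite mem_filter pH andbT in_gsort -el.
Qed.

Variant verts_par_spec G H : nat -> Prop :=
  | VertsParL v of v \in verts G : verts_par_spec G H v
  | VertsParR v of v \in verts H & par_fuse G H v = None :
      verts_par_spec G H (v + par_off G).

Lemma verts_parP G H v : v \in verts (g_par G H) -> verts_par_spec G H v.
Proof.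
rewrite mem_verts_par => /orP [vG|/and3P [le vH /eqP fn]]; first exact: VertsParL.
by rewrite -(subnK le); apply: VertsParR.
Qed.

Lemma verts_par_l G H v : v \in verts G -> v \in verts (g_par G H).
Proof. by rewrite mem_verts_par => ->. Qed.

Lemma verts_par_r G H v : v \in verts H -> par_fuse G H v = None ->
  v + par_off G \in verts (g_par G H).
Proof. by rewrite mem_verts_par leq_addl addnK => -> ->; rewrite orbT. Qed.

Variant src_par_spec G H : nat -> nat -> Prop :=
  | SrcParL l v of (l, v) \in src G : src_par_spec G H l v
  | SrcParR l v of l \notin labels G & (l, v) \in src H :
      src_par_spec G H l (v + par_off G).

Lemma src_parP G H l w : wf_graph H ->
  (l, w) \in src (g_par G H) -> src_par_spec G H l w.
Proof.
move=> wH; rewrite mem_src_par // => /orP [lw|/and3P [nl le lw]]; first exact: SrcParL.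
by rewrite -(subnK le); apply: SrcParR.
Qed.

Lemma src_par_l G H l v : (l, v) \in src G -> (l, v) \in src (g_par G H).
Proof. by rewrite src_par mem_cat => ->. Qed.

Lemma src_par_r G H l v : wf_graph H -> l \notin labels G -> (l, v) \in src H ->
  (l, v + par_off G) \in src (g_par G H).
Proof. by move=> wH nl lv; rewrite mem_src_par // nl leq_addl addnK lv orbT. Qed.

Lemma par_inr_src G H l v : wf_graph H -> (l, v) \in src H ->
  par_inr G H v = odflt (v + par_off G) (src_vertex G l).
Proof. by move=> wH lv; rewrite /par_inr (par_fuse_src _ wH lv). Qed.

Lemma par_inr_verts G H v :
  wf_graph G -> v \in verts H -> par_inr G H v \in verts (g_par G H).
Proof.
move=> wG vH; rewrite /par_inr mem_verts_par.
case e: par_fuse => [w|] /=; first by rewrite (par_fuse_verts wG e).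
by rewrite leq_addl addnK vH e orbT.
Qed.

Lemma wf_par G H : wf_graph G -> wf_graph H -> wf_graph (g_par G H).
Proof.
move=> wG wH; have [uV eE sE uL uS] := wG; have [uV' eE' sE' uL' uS'] := wH.
split.
- rewrite verts_par cat_uniq uV map_inj_uniq ?filter_uniq ?andbT //; last exact: addIn.
  by apply/hasPn => _ /mapP [v _ ->]; apply/negP => /ltn_par_off; rewrite ltnNge leq_addl.
- rewrite edges_par all_cat all_map; apply/andP; split.
    by apply: sub_all eE => e; apply: sub_all => v vG; rewrite verts_par mem_cat vG.
  apply: sub_all eE' => e /= he; rewrite all_map.
  by apply: sub_all he => v; apply: par_inr_verts.
- apply/allP => -[l w]; rewrite mem_src_par // mem_verts_par.
  case/orP => [/(src_in_verts wG) -> //|/and3P [nl le lw]].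
  by rewrite le (src_in_verts wH lw) (par_fuse_src _ wH lw) src_vertex_notin ?orbT.
- rewrite -/(labels _) labels_par cat_uniq uL uniq_map_filter // andbT.
  by apply/hasPn => l /mapP [p]; rewrite mem_filter -in_gsort => /andP[np _] ->.
- rewrite (src_parE _ wH) map_cat cat_uniq uS /=; apply/andP; split.
    apply/hasPn => _ /mapP [_ /mapP [p _ ->] ->] /=; apply/negP.
    move=> /mapP [[l v] /(src_in_verts wG) /ltn_par_off + /= e].
    by rewrite -e ltnNge leq_addl.
  rewrite -map_comp (map_comp (addn^~ (par_off G)) snd) map_inj_uniq; last exact: addIn.
  exact: uniq_map_filter.
Qed.

Lemma src_vertex_par_l G H l v : wf_graph G -> wf_graph H ->
  (l, v) \in src G -> src_vertex (g_par G H) l = Some v.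
Proof. by move=> wG wH lv; apply: src_vertex_in (wf_par wG wH) (src_par_l H lv). Qed.

Lemma src_vertex_par_r G H l v : wf_graph G -> wf_graph H ->
  (l, v) \in src H -> src_vertex (g_par G H) l = Some (par_inr G H v).
Proof.
move=> wG wH lv; rewrite (par_inr_src _ wH lv).
case: (src_vertexP G l) => [u lu|nl] /=; first exact: src_vertex_par_l.
exact: src_vertex_in (wf_par wG wH) (src_par_r wH nl lv).
Qed.

Lemma src_vertex_par_notin G H l : l \notin labels G -> l \notin labels H ->
  src_vertex (g_par G H) l = None.
Proof. by move=> nG nH; rewrite src_vertex_notin // mem_labels_par negb_or nG. Qed.

Lemma src_label_par_l G H v : wf_graph G -> wf_graph H -> v \in verts G ->
  src_label (g_par G H) v = src_label G v.
Proof.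
move=> wG wH vG; case: (src_labelP G v) => [l lv|nv].
  exact: src_label_in (wf_par wG wH) (src_par_l H lv).
case: (src_labelP (g_par G H) v) => // l lv; move: vG nv.
case: (src_parP wH lv) => {lv}l {}v; first by move=> lv _; rewrite (map_f snd lv).
by move=> _ _ /ltn_par_off; rewrite ltnNge leq_addl.
Qed.

Lemma par_fuse_parl G H K v : wf_graph H -> wf_graph K -> v \in verts H ->
  par_fuse G (g_par H K) v = par_fuse G H v.
Proof. by move=> wH wK vH; rewrite /par_fuse src_label_par_l. Qed.

Lemma par_inr_parl G H K v : wf_graph H -> wf_graph K -> v \in verts H ->
  par_inr G (g_par H K) v = par_inr G H v.
Proof. by move=> wH wK vH; rewrite /par_inr par_fuse_parl. Qed.

Lemma par_fuse_parr_nsrc G H K v : wf_graph H -> wf_graph K -> v \notin src_verts K ->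
  par_fuse G (g_par H K) (v + par_off H) = None.
Proof.
move=> wH wK nv; apply/par_fuse_nsrc/mapP => -[[l w] + /= ew]; rewrite -ew mem_src_par //.
case/orP => [/(src_in_verts wH) /ltn_par_off|/and3P [_ _]]; first by rewrite ltnNge leq_addl.
by rewrite addnK => /(map_f snd); apply/negP.
Qed.

Lemma wf_restrict G r : wf_graph G -> wf_graph (g_restrict r G).
Proof.
case=> uV eE sE uL uS; split; rewrite //= ?uniq_map_filter //.
by rewrite all_filter; apply: sub_all sE => p /= ->; rewrite implybT.
Qed.

Lemma wf_rename G (b : nat -> nat) : injective b -> wf_graph G -> wf_graph (g_rename b G).
Proof.
move=> bi [uV eE sE uL uS]; split; rewrite //= ?all_map -?map_comp //.
by rewrite (map_comp b fst) map_inj_uniq.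
Qed.

Lemma wf_zero s : wf_graph (g_zero A s).
Proof.
by split; rewrite //= ?all_map ?map_fst_diag ?map_snd_diag ?fset_uniq //; apply/allP.
Qed.

Lemma wf_edge (a : A) s : wf_graph (g_edge a s).
Proof.
split; rewrite //= ?all_map ?map_fst_diag ?map_snd_diag ?undup_uniq ?andbT //.
all: by apply/allP => // v; rewrite mem_undup.
Qed.

Lemma wf_eval x y t : term_G t -> wf_graph x -> (forall i, wf_graph (y i)) ->
  wf_graph (eval x y t).
Proof.
move=> + wx wy.
elim: t => //= [s _|a s _|s t IH ht|b t IH [[/bij_inj bi _] ht]|t1 IH1 t2 IH2 [h1 h2]].
- exact: wf_zero.
- exact: wf_edge.
- exact: wf_restrict (IH ht).
- exact: wf_rename bi (IH ht).
- exact: wf_par (IH1 h1) (IH2 h2).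
Qed.

Definition map_edge (f : nat -> nat) (e : A * seq nat) := (e.1, map f e.2).
Definition map_src (f : nat -> nat) (p : nat * nat) := (p.1, f p.2).

Lemma map_edge_comp f g : map_edge f \o map_edge g =1 map_edge (f \o g).
Proof. by move=> e; rewrite /map_edge /= map_comp. Qed.

Lemma map_edge_id s : map (map_edge id) s = s.
Proof. by rewrite -[RHS]map_id; apply: eq_map => -[a t]; rewrite /map_edge map_id. Qed.

Lemma map_src_id s : map (map_src id) s = s.
Proof. by rewrite -[RHS]map_id; apply: eq_map => -[]. Qed.

Lemma iso_intro G H f :
  Permutation (map f (verts G)) (verts H) ->
  Permutation (map (map_edge f) (edges G)) (edges H) ->
  Permutation (map (map_src f) (src G)) (src H) -> iso G H.
Proof. by exists f. Qed.

Lemma map_edge_in G f g : wf_graph G -> {in verts G, f =1 g} ->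
  map (map_edge f) (edges G) = map (map_edge g) (edges G).
Proof.
case=> _ eE _ _ _ fg; apply: (eq_map_all eE) => -[a s] /allP /= sG.
by rewrite /map_edge /=; congr (_, _); apply/eq_in_map => v /sG /fg.
Qed.

Lemma map_src_in G f g : wf_graph G -> {in verts G, f =1 g} ->
  map (map_src f) (src G) = map (map_src g) (src G).
Proof.
by move=> wG fg; apply/eq_in_map => -[l v] /(src_in_verts wG) vG; rewrite /map_src /= fg.
Qed.

Lemma iso_refl G : iso G G.
Proof.
by exists id; rewrite map_id map_edge_id map_src_id.
Qed.

Lemma iso_trans G H K : iso G H -> iso H K -> iso G K.
Proof.
move=> [f [v1 e1 s1]] [g [v2 e2 s2]]; apply: (@iso_intro _ _ (g \o f)).
- by rewrite map_comp; apply: Permutation_trans v2; apply: Permutation_map_seq.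
- rewrite -(eq_map (map_edge_comp g f)) map_comp.
  by apply: Permutation_trans e2; apply: Permutation_map_seq.
- rewrite (eq_map (g := map_src g \o map_src f)) //.
  by rewrite map_comp; apply: Permutation_trans s2; apply: Permutation_map_seq.
Qed.

Lemma iso_sym G H : wf_graph G -> wf_graph H -> iso G H -> iso H G.
Proof.
move=> wG wH [f [hv he hs]].
have finj : {in verts G &, injective f}.
  by apply: inj_in_uniq_map; rewrite (perm_uniq (introT PermutationP hv)); case: wH.
pose g w := nth 0 (verts G) (index w (map f (verts G))).
have gf : {in verts G, g \o f =1 id}.
  move=> v vG; have iv : index (f v) (map f (verts G)) < size (verts G).
    by rewrite -(size_map f) index_mem map_f.
  by apply: finj; rewrite /= ?mem_nth // /g -(nth_map 0 (f 0)) // nth_index // map_f.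
apply: (@iso_intro _ _ g).
- apply: Permutation_trans (Permutation_map_seq g (Permutation_sym hv)) _.
  by rewrite -map_comp (eq_in_map _ id _).1 ?map_id.
- apply: Permutation_trans (Permutation_map_seq _ (Permutation_sym he)) _.
  by rewrite -map_comp (eq_map (map_edge_comp g f)) (map_edge_in wG gf) map_edge_id.
- apply: Permutation_trans (Permutation_map_seq _ (Permutation_sym hs)) _.
  by rewrite -map_comp (eq_map (g := map_src (g \o f))) // (map_src_in wG gf) map_src_id.
Qed.

Lemma iso_labels G H : iso G H -> labels G =i labels H.
Proof.
move=> [f [_ _ /(Permutation_map_seq fst) /PermutationP /perm_mem hs]] l.
by rewrite /labels -hs -map_comp.
Qed.

Lemma iso_restrict G H r : iso G H -> iso (g_restrict r G) (g_restrict r H).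
Proof.
move=> [f [hv he hs]]; apply: (@iso_intro _ _ f) => //=.
have -> : map (map_src f) [seq p <- src G | p.1 \in r] =
          [seq p <- map (map_src f) (src G) | p.1 \in r] by rewrite filter_map.
by apply/PermutationP/perm_filter/PermutationP.
Qed.

Lemma iso_rename G H b : iso G H -> iso (g_rename b G) (g_rename b H).
Proof.
move=> [f [hv he hs]]; apply: (@iso_intro _ _ f) => //=.
by move: (Permutation_map_seq (fun p : nat * nat => (b p.1, p.2)) hs); rewrite -!map_comp.
Qed.

Lemma iso_par_fuse G G' D f : wf_graph G' -> labels G =i labels G' ->
  Permutation (map (map_src f) (src G)) (src G') ->
  forall v, par_fuse G' D v = omap f (par_fuse G D v).
Proof.
move=> wG' hl /PermutationP /perm_mem hs v; rewrite /par_fuse.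
case: (src_label D v) => //= l; case: (src_vertexP G l) => [w lw|nl] /=.
  by apply: src_vertex_in wG' _; rewrite -hs (map_f (map_src f) lw).
by rewrite src_vertex_notin // -hl.
Qed.

Lemma iso_parl G G' D : wf_graph G -> wf_graph G' -> wf_graph D -> iso G G' ->
  iso (g_par G D) (g_par G' D).
Proof.
move=> wG wG' wD ih; have hl := iso_labels ih; case: ih => f [hv he hs].
have hf := iso_par_fuse D wG' hl hs.
pose f' v := if v < par_off G then f v else v - par_off G + par_off G'.
have f'G : {in verts G, f' =1 f} by move=> v /ltn_par_off vG; rewrite /f' vG.
have f'D d : f' (d + par_off G) = d + par_off G'.
  by rewrite /f' ltnNge leq_addl /= addnK.
have f'inr : {in verts D, f' \o par_inr G D =1 par_inr G' D}.
  move=> d _; rewrite /par_inr hf /=; case e: par_fuse => [w|] /=; last exact: f'D.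
  by rewrite f'G // (par_fuse_verts wG e).
apply: (@iso_intro _ _ f').
- rewrite !verts_par map_cat (eq_in_map f' f _).1 //; apply: Permutation_app => //.
  rewrite -map_comp (eq_map f'D) (eq_filter (a2 := fun d => ~~ par_fuse G' D d)) //.
  by move=> d; rewrite hf; case: par_fuse.
- rewrite !edges_par map_cat (map_edge_in wG f'G); apply: Permutation_app => //.
  by rewrite -map_comp (eq_map (map_edge_comp _ _)) (map_edge_in wD f'inr).
- rewrite !(src_parE _ wD) map_cat (map_src_in wG f'G); apply: Permutation_app => //.
  rewrite -map_comp (eq_filter (a2 := fun p => p.1 \notin gsort G')); last first.
    by move=> p; rewrite !in_gsort hl.
  rewrite (eq_map (g := fun p => (p.1, p.2 + par_off G'))) //.
  by move=> -[l v]; rewrite /map_src /= f'D.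
Qed.

End Graphs.

(** * Parallel composition is commutative and associative up to isomorphism *)

Section ParallelIso.
Variable A : Type.
Notation graph := (graph A).
Implicit Types G H K C D x : graph.

Lemma perm_verts_mem G H f : wf_graph G -> wf_graph H ->
  {in verts G &, injective f} -> verts H =i map f (verts G) ->
  Permutation (map f (verts G)) (verts H).
Proof.
move=> [uG _ _ _ _] [uH _ _ _ _] fi hm; apply/PermutationP/uniq_perm => //.
by rewrite map_inj_in_uniq.
Qed.

Lemma perm_src_mem G H f : wf_graph G -> wf_graph H ->
  src H =i map (map_src f) (src G) -> Permutation (map (map_src f) (src G)) (src H).
Proof.
move=> [_ _ _ uG _] [_ _ _ uH _] hm; apply/PermutationP/uniq_perm => //.
  by apply: (@map_uniq _ _ fst); rewrite -map_comp.
by apply: (@map_uniq _ _ fst).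
Qed.

Lemma par_inr_fuse G H g h : wf_graph G -> wf_graph H -> h \in verts H ->
  par_inr H G g = h -> par_fuse G H h = Some g.
Proof.
move=> wG wH hH; rewrite /par_inr; case e: par_fuse => [w|] /= ewh.
  by rewrite -ewh; apply: par_fuse_sym e.
by move: (ltn_par_off hH); rewrite -ewh ltnNge leq_addl.
Qed.

Lemma par_inr_inj G H : wf_graph G -> wf_graph H -> {in verts H &, injective (par_inr G H)}.
Proof.
move=> wG wH h1 h2 _ _ e; set w := par_inr G H h1 in e.
have [wGv|wGn] := boolP (w \in verts G).
  have := par_inr_fuse wH wG wGv (erefl w); have := par_inr_fuse wH wG wGv (esym e).
  by move=> -> [].
have inr_notin h : par_inr G H h \notin verts G -> par_inr G H h = h + par_off G.
  by rewrite /par_inr; case e': par_fuse => [u|] //=; rewrite (par_fuse_verts wG e').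
by apply/(@addIn (par_off G)); rewrite -!inr_notin -?e.
Qed.

Section Swap.
Variables G H : graph.
Hypotheses (wG : wf_graph G) (wH : wf_graph H).

Let swap v := if v < par_off G then par_inr H G v else v - par_off G.

Let swapL : {in verts G, swap =1 par_inr H G}.
Proof. by move=> v /ltn_par_off vG; rewrite /swap vG. Qed.

Let swapR h : swap (h + par_off G) = h.
Proof. by rewrite /swap ltnNge leq_addl /= addnK. Qed.

Let swap_inr : {in verts H, swap \o par_inr G H =1 id}.
Proof.
move=> h hH /=; rewrite /par_inr; case e: par_fuse => [g|] /=; last exact: swapR.
by rewrite swapL ?(par_fuse_verts wG e) // /par_inr (par_fuse_sym wH wG e).
Qed.

Let swap_inj : {in verts (g_par G H) &, injective swap}.
Proof.
have inr_fused h g : h \in verts H -> par_fuse G H h = None -> par_inr H G g <> h.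
  by move=> hH fn /(par_inr_fuse wG wH hH); rewrite fn.
move=> v1 v2 /verts_parP [g1 g1G|h1 h1H fn1] /verts_parP [g2 g2G|h2 h2H fn2].
- by rewrite !swapL //; apply: par_inr_inj.
- by rewrite [swap g1]swapL // swapR => /inr_fused; case.
- by rewrite [swap g2]swapL // swapR => /esym /inr_fused; case.
- by rewrite !swapR => ->.
Qed.

Let swap_verts : verts (g_par H G) =i map swap (verts (g_par G H)).
Proof.
move=> v; apply/idP/mapP => [/verts_parP [h hH|g gG fn]|[u /verts_parP [g gG|h hH fn] ->]].
- case e: (par_fuse G H h) => [g|].
    exists g; rewrite ?swapL ?verts_par_l ?(par_fuse_verts wG e) //.
    by rewrite /par_inr (par_fuse_sym wH wG e).
  by exists (h + par_off G); rewrite ?swapR ?verts_par_r.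
- by exists g; rewrite ?verts_par_l // swapL // /par_inr fn.
- by rewrite swapL //; apply: par_inr_verts.
- by rewrite swapR verts_par_l.
Qed.

Let swap_edges : map (map_edge swap) (edges (g_par G H)) =
  map (map_edge (par_inr H G)) (edges G) ++ edges H.
Proof.
rewrite edges_par map_cat (map_edge_in wG swapL); congr (_ ++ _).
by rewrite -map_comp (eq_map (map_edge_comp _ _)) (map_edge_in wH swap_inr) map_edge_id.
Qed.

Let swap_src : src (g_par H G) =i map (map_src swap) (src (g_par G H)).
Proof.
move=> -[l w]; apply/idP/mapP => [/(src_parP wG) [{}l h lh|{}l g nl lg]|].
- case: (src_vertexP G l) => [g lg|nl]; last first.
    by exists (l, h + par_off G); rewrite ?src_par_r // /map_src /= swapR.
  exists (l, g); rewrite ?src_par_l // /map_src /= swapL ?(src_in_verts wG lg) //.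
  by rewrite (par_inr_src _ wG lg) (src_vertex_in wH lh).
- exists (l, g); rewrite ?src_par_l // /map_src /= swapL ?(src_in_verts wG lg) //.
  by rewrite (par_inr_src _ wG lg) src_vertex_notin.
move=> [[l' v] /(src_parP wH) [{}l' g lg|{}l' h nl lh] [-> ->]].
- rewrite swapL ?(src_in_verts wG lg) // (par_inr_src _ wG lg).
  by case: (src_vertexP H l') => [h lh|nl]; [apply: src_par_l | apply: src_par_r].
- by rewrite swapR src_par_l.
Qed.

Lemma iso_par_comm : iso (g_par G H) (g_par H G).
Proof.
have [wGH wHG] := (wf_par wG wH, wf_par wH wG).
apply: (iso_intro (f := swap)).
- exact: perm_verts_mem wGH wHG swap_inj swap_verts.
- by rewrite swap_edges edges_par; apply: Permutation_app_comm.
- exact: perm_src_mem wGH wHG swap_src.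
Qed.

End Swap.

Section Assoc.
Variables G H K : graph.
Hypotheses (wG : wf_graph G) (wH : wf_graph H) (wK : wf_graph K).

Let assoc v :=
  if v < par_off (g_par G H) then v else v - par_off (g_par G H) + par_off H + par_off G.

Let assocL : {in verts (g_par G H), assoc =1 id}.
Proof. by move=> v /ltn_par_off vGH; rewrite /assoc vGH. Qed.

Let assocR k : assoc (k + par_off (g_par G H)) = k + par_off H + par_off G.
Proof. by rewrite /assoc ltnNge leq_addl /= addnK. Qed.

Let assoc_K k : k \in verts K ->
  (~~ par_fuse (g_par G H) K k =
     ~~ par_fuse H K k && ~~ par_fuse G (g_par H K) (k + par_off H)) /\
  assoc (par_inr (g_par G H) K k) = par_inr G (g_par H K) (par_inr H K k).
Proof.
move=> kK; rewrite /par_inr; case: (src_labelP K k) => [l lk|nk]; last first.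
  by rewrite (par_fuse_nsrc _ nk) (par_fuse_nsrc _ nk) /= par_fuse_parr_nsrc // assocR.
rewrite !(par_fuse_src _ wK lk); case: (src_vertexP H l) => [h lh|nlH] /=.
  rewrite (src_vertex_par_r wG wH lh) /= assocL ?par_inr_verts ?(src_in_verts wH lh) //.
  by rewrite -/(par_inr _ _ _) par_inr_parl // (src_in_verts wH lh).
have lk' := src_par_r wK nlH lk; rewrite (par_fuse_src _ (wf_par wH wK) lk').
case: (src_vertexP G l) => [g lg|nlG] /=.
  by rewrite (src_vertex_par_l wG wH lg) /= assocL // verts_par_l // (src_in_verts wG lg).
by rewrite src_vertex_par_notin //= assocR.
Qed.

Let assoc_verts : map assoc (verts (g_par (g_par G H) K)) = verts (g_par G (g_par H K)).
Proof.
rewrite [in LHS]verts_par map_cat (eq_in_map _ id _).1 // map_id.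
rewrite -map_comp (eq_map assocR) !verts_par filter_cat map_cat -catA.
congr (_ ++ _ ++ _).
  by congr map; apply: eq_in_filter => h hH; rewrite par_fuse_parl.
rewrite filter_map -map_comp -filter_predI; congr map.
by apply: eq_in_filter => k kK; rewrite /predI /preim /= (assoc_K kK).1 andbC.
Qed.

Let assoc_edges :
  map (map_edge assoc) (edges (g_par (g_par G H) K)) = edges (g_par G (g_par H K)).
Proof.
rewrite [in LHS]edges_par map_cat (map_edge_in (wf_par wG wH) assocL) map_edge_id.
rewrite !edges_par map_cat -catA -!map_comp; congr (_ ++ _ ++ _).
  by apply: map_edge_in => // h hH; rewrite par_inr_parl.
rewrite (eq_map (map_edge_comp _ _)) (eq_map (map_edge_comp _ _)).
by apply: map_edge_in => // k kK /=; rewrite (assoc_K kK).2.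
Qed.

Let assoc_src :
  map (map_src assoc) (src (g_par (g_par G H) K)) = src (g_par G (g_par H K)).
Proof.
rewrite (src_parE _ wK) map_cat (map_src_in (wf_par wG wH) assocL) map_src_id.
rewrite !(src_parE _ wH) ?(src_parE _ (wf_par wH wK)) (src_parE _ wK) filter_cat map_cat -catA.
congr (_ ++ _ ++ _); rewrite filter_map -!map_comp -filter_predI.
apply: map_filter_eq => -[l v] _; last by rewrite /map_src /= assocR.
by rewrite /predI /preim /= !in_gsort mem_labels_par negb_or andbC.
Qed.

Lemma iso_par_assoc : iso (g_par (g_par G H) K) (g_par G (g_par H K)).
Proof.
by apply: (iso_intro (f := assoc)); rewrite ?assoc_verts ?assoc_edges ?assoc_src.
Qed.

End Assoc.

End ParallelIso.

(** * Identities between renaming, restriction and parallel composition *)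

Section Relabelling.
Variable A : Type.
Notation graph := (graph A).
Implicit Types G H K C D x : graph.

Lemma graph_eq G H : verts G = verts H -> edges G = edges H -> src G = src H -> G = H.
Proof. by case: G H => V E S [V' E' S'] /= -> -> ->. Qed.

Lemma verts_edges_par_eq G G' H H' :
  verts G = verts G' -> edges G = edges G' -> verts H = verts H' -> edges H = edges H' ->
  par_fuse G H =1 par_fuse G' H' ->
  verts (g_par G H) = verts (g_par G' H') /\ edges (g_par G H) = edges (g_par G' H').
Proof.
move=> eV eE eVH eEH eF; have eI : par_inr G H =1 par_inr G' H'.
  by move=> v; rewrite /par_inr eF /par_off eV.
rewrite !verts_par !edges_par eV eE eVH eEH /par_off eV; split; congr (_ ++ _).
  by congr map; apply: eq_filter => v; rewrite eF.
by apply: eq_map => e; rewrite (eq_map eI).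
Qed.

Lemma src_rename G b : src (g_rename b G) = [seq (b p.1, p.2) | p <- src G].
Proof. by []. Qed.

Lemma src_restrict G r : src (g_restrict r G) = [seq p <- src G | p.1 \in r].
Proof. by []. Qed.

Lemma src_label_rename G b v : src_label (g_rename b G) v = omap b (src_label G v).
Proof. by rewrite /src_label /=; elim: (src G) => //= -[l w] s IH /=; case: eqP. Qed.

Lemma src_vertex_rename G b l : injective b ->
  src_vertex (g_rename b G) (b l) = src_vertex G l.
Proof.
move=> bi; rewrite /src_vertex /=.
by elim: (src G) => //= -[m w] s IH /=; rewrite inj_eq //; case: eqP.
Qed.

Lemma src_vertex_restrict G r l :
  src_vertex (g_restrict r G) l = if l \in r then src_vertex G l else None.
Proof.
rewrite /src_vertex /=; elim: (src G) l => [|[m w] s IH] l /=; first by case: ifP.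
by case mr: (m \in r) => /=; have [<-|ne] := eqVneq m l; rewrite /= ?IH ?mr.
Qed.

Lemma src_label_restrict G r v : wf_graph G -> src_label (g_restrict r G) v =
  if src_label G v is Some l then (if l \in r then Some l else None) else None.
Proof.
move=> wG; have wrG := wf_restrict r wG.
case: (src_labelP G v) => [l lv|nv]; case: (src_labelP (g_restrict r G) v) => [l' |nv'] //.
- rewrite /= mem_filter => /andP[/= l'r l'v]; have := src_label_in wG l'v.
  by rewrite (src_label_in wG lv) => -[->]; rewrite l'r.
- case: ifP => // lr; have : (l, v) \in src (g_restrict r G) by rewrite mem_filter lr.
  by move/(map_f snd); rewrite (negbTE nv').
- by rewrite mem_filter => /andP[_ /(map_f snd)]; rewrite (negbTE nv).
Qed.

Lemma labels_rename G b : labels (g_rename b G) = map b (labels G).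
Proof. by rewrite /labels -!map_comp. Qed.

Lemma mem_labels_restrict G r l :
  (l \in labels (g_restrict r G)) = (l \in r) && (l \in labels G).
Proof.
rewrite /labels /=; apply/mapP/andP => [[p + ->]|[lr /mapP [p pG el]]].
  by rewrite mem_filter => /andP[pr pG]; split => //; apply: map_f.
by exists p => //; rewrite mem_filter -el lr.
Qed.

Lemma rename_id G : g_rename id G = G.
Proof. by apply: graph_eq => //=; rewrite -[RHS]map_id; apply: eq_map => -[]. Qed.

Lemma restrict_gsort G : g_restrict (gsort G) G = G.
Proof. by apply: graph_eq => //=; apply/all_filterP/allP => p pG; rewrite in_gsort map_f. Qed.

Lemma rename_comp G a b : g_rename b (g_rename a G) = g_rename (b \o a) G.
Proof. by apply: graph_eq => //=; rewrite -map_comp. Qed.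

Lemma restrictI G r q : g_restrict q (g_restrict r G) = g_restrict (r `&` q)%fset G.
Proof.
apply: graph_eq => //=; rewrite -filter_predI; apply: eq_filter => p.
by rewrite /predI /= in_fsetI andbC.
Qed.

Lemma rename_restrict G b r : injective b ->
  g_rename b (g_restrict r G) = g_restrict [fset b l | l in r]%fset (g_rename b G).
Proof.
move=> bi; apply: graph_eq => //=; rewrite filter_map; congr map.
by apply: eq_filter => p /=; rewrite mem_imfset.
Qed.

Lemma rename_par G H b : injective b ->
  g_rename b (g_par G H) = g_par (g_rename b G) (g_rename b H).
Proof.
move=> bi; have eF : par_fuse G H =1 par_fuse (g_rename b G) (g_rename b H).
  move=> v; rewrite /par_fuse src_label_rename.
  by case: src_label => //= l; rewrite src_vertex_rename.
have [eV eE] := verts_edges_par_eq (G := G) (H := H) (G' := g_rename b G)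
  (H' := g_rename b H) erefl erefl erefl erefl eF.
apply: graph_eq => //; rewrite !src_rename !src_par map_cat src_rename filter_map -!map_comp.
congr (_ ++ _); apply: map_filter_eq => -[l v] _ /=; last by rewrite /par_inr eF.
by rewrite !in_gsort labels_rename mem_map.
Qed.

Lemma restrict_rename_id G g r : injective g -> {in r, g =1 id} ->
  g_restrict r (g_rename g G) = g_restrict r G.
Proof.
move=> gi gr; apply: graph_eq => //=; rewrite filter_map.
rewrite (eq_filter (a2 := fun p => p.1 \in r)); last first.
  move=> [l v]; rewrite /preim /=; apply/idP/idP => [glr|lr]; last by rewrite gr.
  by rewrite -(gi _ _ (gr _ glr)).
rewrite -[RHS]map_id; apply/eq_in_map => -[l v]; rewrite mem_filter /= => /andP[lr _].
by rewrite gr.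
Qed.

Lemma restrict_par_swap Z D r :
  (forall l, l \in labels Z -> l \notin r -> l \notin labels D) ->
  g_par (g_restrict r Z) D = g_restrict (r `|` gsort D)%fset (g_par Z D).
Proof.
move=> dj; have eF : par_fuse (g_restrict r Z) D =1 par_fuse Z D.
  move=> v; rewrite /par_fuse; case: (src_labelP D v) => //= l /(map_f fst) lD.
  rewrite src_vertex_restrict; case: ifP => // /negbT lr.
  by rewrite src_vertex_notin //; apply: contraL lD => /dj; apply.
have [eV eE] := verts_edges_par_eq (G := g_restrict r Z) (H := D) (G' := Z) (H' := D)
  erefl erefl erefl erefl eF.
apply: graph_eq => //; rewrite src_restrict !src_par src_restrict filter_cat; congr (_ ++ _).
  apply: eq_in_filter => -[l v] /(map_f fst) /= lZ; rewrite in_fsetU in_gsort.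
  by case: (boolP (l \in r)) => //= lr; apply/esym/negbTE/dj.
rewrite filter_map -filter_predI.
apply: map_filter_eq => -[l v] lv /=; last by rewrite /par_inr eF.
have lD : l \in labels D := map_f fst lv.
rewrite /predI /preim /= !in_gsort mem_labels_restrict in_fsetU in_gsort lD orbT /=.
by case: (boolP (l \in r)) => lr //=; apply/esym; apply: contraL lD => /dj; apply.
Qed.

Lemma filter_fset0 (s : seq (nat * nat)) : [seq p <- s | p.1 \in fset0] = [::].
Proof. by elim: s => //= p s; rewrite in_fset0. Qed.

Lemma gsort0_src_nil G : gsort G = fset0 -> src G = [::].
Proof.
case: G => V E [|[l v] S] //= s0; have : l \in gsort (Graph V E ((l, v) :: S)).
  by rewrite in_gsort mem_head.
by rewrite s0 in_fset0.
Qed.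

Lemma restrict_src_nil G r :
  src (g_restrict r G) = [::] -> g_restrict r G = g_restrict fset0 G.
Proof. by move=> e; apply: graph_eq => //; rewrite e src_restrict filter_fset0. Qed.

Lemma restrict0_par_rename x C a a' : cancel a a' -> cancel a' a ->
  g_restrict fset0 (g_par (g_rename a x) C) = g_restrict fset0 (g_par x (g_rename a' C)).
Proof.
move=> aK a'K; have eF : par_fuse (g_rename a x) C =1 par_fuse x (g_rename a' C).
  move=> v; rewrite /par_fuse src_label_rename; case: src_label => //= l.
  by rewrite -{1}(a'K l) src_vertex_rename //; apply: can_inj aK.
have [eV eE] := verts_edges_par_eq (G := g_rename a x) (H := C) (G' := x)
  (H' := g_rename a' C) erefl erefl erefl erefl eF.
by apply: graph_eq; rewrite // !src_restrict !filter_fset0.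
Qed.

Lemma restrict0_par_restrict x D : wf_graph D ->
  g_restrict fset0 (g_par x D) = g_restrict fset0 (g_par x (g_restrict (gsort x) D)).
Proof.
move=> wD; have eF : par_fuse x D =1 par_fuse x (g_restrict (gsort x) D).
  move=> v; rewrite /par_fuse src_label_restrict //; case: src_label => //= l.
  by case: ifP => // /negbT; rewrite in_gsort => /src_vertex_notin.
have [eV eE] := verts_edges_par_eq (G := x) (H := D) (G' := x)
  (H' := g_restrict (gsort x) D) erefl erefl erefl erefl eF.
by apply: graph_eq; rewrite // !src_restrict !filter_fset0.
Qed.

End Relabelling.

(** * One-hole contexts in normal form *)

(* Exchanges the entries of [s] with the block [M, M + size s). *)
Definition swap_block (s : seq nat) (M n : nat) : nat :=
  if n \in s then M + index n s
  else if (M <= n) && (n < M + size s) then nth 0 s (n - M) else n.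

Lemma swap_block_inv s M : uniq s -> all (fun n => n < M) s -> involutive (swap_block s M).
Proof.
move=> us sM n; rewrite /swap_block; case: (boolP (n \in s)) => ns.
  have iM : M + index n s \notin s by apply/negP => /(allP sM); rewrite ltnNge leq_addr.
  by rewrite (negbTE iM) leq_addr ltn_add2l index_mem ns /= addKn nth_index.
case c: ((M <= n) && (n < M + size s)); last by rewrite (negbTE ns) c.
case/andP: c => le lt.
have ins : nth 0 s (n - M) \in s by apply: mem_nth; rewrite ltn_subLR.
by rewrite ins index_uniq ?subnKC // ltn_subLR.
Qed.

Lemma fresh_relabel (S r D : {fset nat}) : exists g : nat -> nat,
  [/\ involutive g, {in r, g =1 id} & {in S, forall m, g m \notin r -> g m \notin D}].
Proof.
set s := enum_fset (S `\` r)%fset; set M := (foldr maxn 0 (enum_fset (S `|` r `|` D)%fset)).+1.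
have ltM l : l \in (S `|` r `|` D)%fset -> l < M by apply: ltn_foldr_maxn.
have sM : all (fun n => n < M) s.
  by apply/allP => n; rewrite in_fsetD => /andP[_ nS]; rewrite ltM // !in_fsetU nS.
exists (swap_block s M); split; first exact: swap_block_inv (fset_uniq _) sM.
  move=> l lr; rewrite /swap_block in_fsetD lr /= ifF //.
  by rewrite leqNgt ltM // !in_fsetU lr orbT.
move=> m mS; case: (boolP (m \in r)) => mr.
  by rewrite /swap_block in_fsetD mr /= ifF ?mr // leqNgt ltM // !in_fsetU mr orbT.
move=> _; apply/negP => gD; have := ltM (swap_block s M m).
by rewrite !in_fsetU gD orbT /swap_block in_fsetD mr mS ltnNge leq_addr => /(_ isT).
Qed.

Section NormalForm.
Variable A : Type.
Notation graph := (graph A).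
Implicit Types G H C D x : graph.

Definition hole_nf (r : {fset nat}) (a : nat -> nat) C x :=
  g_restrict r (g_par (g_rename a x) C).

Definition nf_context (sg : {fset nat}) (F : graph -> graph) := exists r a a' C,
  [/\ cancel a a', cancel a' a, wf_graph C &
      forall x, wf_graph x -> gsort x = sg -> iso (F x) (hole_nf r a C x)].

Lemma wf_hole_nf r a C x :
  injective a -> wf_graph C -> wf_graph x -> wf_graph (hole_nf r a C x).
Proof. by move=> ai wC wx; apply/wf_restrict/wf_par/wC/wf_rename. Qed.

Lemma par_zero0 G : g_par G (g_zero A fset0) = G.
Proof.
have e0 : enum_fset (@fset0 nat) = [::] by apply: size0nil; apply: cardfs0.
by case: G => V E S; rewrite /g_par /g_zero e0 /= !cats0.
Qed.

Variable sg : {fset nat}.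

Lemma nf_context_id : nf_context sg id.
Proof.
exists sg, id, id, (g_zero A fset0); split; [by []|by []|exact: wf_zero|move=> x wx <-].
by rewrite /hole_nf par_zero0 rename_id restrict_gsort; apply: iso_refl.
Qed.

Lemma nf_context_iso F F' : (forall x, wf_graph x -> gsort x = sg -> iso (F x) (F' x)) ->
  nf_context sg F' -> nf_context sg F.
Proof.
move=> FF' [r [a [a' [C [aK a'K wC FE]]]]]; exists r, a, a', C; split => // x wx sx.
exact: iso_trans (FF' x wx sx) (FE x wx sx).
Qed.

Lemma nf_context_restrict F q : nf_context sg F -> nf_context sg (g_restrict q \o F).
Proof.
case=> r [a [a' [C [aK a'K wC FE]]]]; exists (r `&` q)%fset, a, a', C; split => // x wx sx.
by rewrite /hole_nf -restrictI; apply/iso_restrict/FE.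
Qed.

Lemma nf_context_rename F b :
  bijective b -> nf_context sg F -> nf_context sg (g_rename b \o F).
Proof.
case=> b' bK b'K [r [a [a' [C [aK a'K wC FE]]]]]; have bi := can_inj bK.
exists [fset b l | l in r]%fset, (b \o a), (a' \o b'), (g_rename b C); split.
- by move=> l /=; rewrite bK aK.
- by move=> l /=; rewrite a'K b'K.
- exact: wf_rename.
move=> x wx sx; apply: iso_trans (iso_rename b (FE x wx sx)) _.
by rewrite /hole_nf rename_restrict // rename_par // rename_comp; apply: iso_refl.
Qed.

Lemma nf_context_par F D : wf_graph D ->
  (forall x, wf_graph x -> gsort x = sg -> wf_graph (F x)) ->
  nf_context sg F -> nf_context sg (fun x => g_par (F x) D).
Proof.
move=> wD wF [r [a [a' [C [aK a'K wC FE]]]]]; have ai := can_inj aK.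
have [g [gK gr gD]] := fresh_relabel ([fset a l | l in sg] `|` gsort C)%fset r (gsort D).
have gi : injective g := inv_inj gK.
exists (r `|` gsort D)%fset, (g \o a), (a' \o g), (g_par (g_rename g C) D); split.
- by move=> l /=; rewrite gK aK.
- by move=> l /=; rewrite a'K gK.
- by apply: wf_par => //; apply: wf_rename.
move=> x wx sx; have wN := wf_hole_nf r ai wC wx.
apply: iso_trans (iso_parl (wF x wx sx) wN wD (FE x wx sx)) _.
rewrite /hole_nf -(restrict_rename_id _ gi gr) rename_par // rename_comp restrict_par_swap.
  by apply/iso_restrict/iso_par_assoc => //; apply: wf_rename => //; apply: inj_comp.
move=> l; rewrite mem_labels_par !labels_rename -in_gsort.
case/orP => /mapP [m mG ->]; apply: gD; rewrite in_fsetU ?in_gsort ?mG ?orbT //.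
by rewrite in_imfset // -sx in_gsort.
Qed.

Lemma gsort_hole_nf r a C x x' : gsort x = gsort x' ->
  gsort (hole_nf r a C x) = gsort (hole_nf r a C x').
Proof.
move=> sx; have lx : labels x =i labels x' by move=> l; rewrite -!in_gsort sx.
apply/fsetP => l; rewrite !in_gsort !mem_labels_restrict !mem_labels_par !labels_rename.
by rewrite (eq_mem_map _ lx).
Qed.

Lemma hole_nf_closed r a a' C x : cancel a a' -> cancel a' a -> wf_graph C ->
  src (hole_nf r a C x) = [::] ->
  hole_nf r a C x = g_restrict fset0 (g_par x (g_restrict (gsort x) (g_rename a' C))).
Proof.
move=> aK a'K wC /restrict_src_nil; rewrite /hole_nf => ->.
rewrite (restrict0_par_rename _ _ aK a'K) restrict0_par_restrict //.
by apply: wf_rename wC; apply: can_inj a'K.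
Qed.

End NormalForm.

Section Terms.
Variable A : Type.
Notation graph := (graph A).
Notation term := (term A).
Implicit Types x z : graph.

Fixpoint x_count (t : term) : nat :=
  match t with
  | TX => 1
  | TRestrict _ t | TRename _ t => x_count t
  | TPar t1 t2 => x_count t1 + x_count t2
  | _ => 0
  end.

Lemma eval_x_free t x z y : x_count t = 0 -> eval x y t = eval z y t.
Proof.
elim: t => //= [s t IH|b t IH|t1 IH1 t2 IH2] c; rewrite ?IH //.
by move: c => /eqP; rewrite addn_eq0 => /andP[/eqP c1 /eqP c2]; rewrite IH1 // IH2.
Qed.

Lemma one_hole_nf sg t y : term_G t -> x_count t = 1 -> (forall i, wf_graph (y i)) ->
  nf_context sg (fun x => eval x y t).
Proof.
move=> + + wy; elim: t => //= [_ _|s t IH ht c|b t IH [[bb _] ht] c|t1 IH1 t2 IH2 [h1 h2]].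
- exact: nf_context_id.
- exact: nf_context_restrict (IH ht c).
- exact: nf_context_rename bb (IH ht c).
have wE t x : term_G t -> wf_graph x -> wf_graph (eval x y t) by move=> ht wx; apply: wf_eval.
have wD t : term_G t -> wf_graph (eval (g_zero A fset0) y t) by move/wE; apply; apply: wf_zero.
case e1: (x_count t1) => [|n1] c.
  apply: (nf_context_iso (F' := fun x => g_par (eval x y t2) (eval (g_zero A fset0) y t1))).
    by move=> x wx _; rewrite (eval_x_free x (g_zero A fset0) y e1); apply: iso_par_comm; auto.
  by apply: nf_context_par; auto; apply: IH2.
apply: (nf_context_iso (F' := fun x => g_par (eval x y t1) (eval (g_zero A fset0) y t2))).
  have e2 : x_count t2 = 0 by lia.
  by move=> x _ _; rewrite (eval_x_free x (g_zero A fset0) y e2); apply: iso_refl.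
by apply: nf_context_par; auto; apply: IH1 => //; lia.
Qed.

(** * Replacing the occurrences of x one at a time *)

Definition upd_env (y : nat -> graph) k z := fun i => if i == k then z else y i.

Fixpoint y_bound (t : term) : nat :=
  match t with
  | TY i => i.+1
  | TRestrict _ t | TRename _ t => y_bound t
  | TPar t1 t2 => maxn (y_bound t1) (y_bound t2)
  | _ => 0
  end.

Fixpoint x_to_y k (t : term) : term :=
  match t with
  | TX => TY A k
  | TRestrict s t => TRestrict s (x_to_y k t)
  | TRename b t => TRename b (x_to_y k t)
  | TPar t1 t2 => TPar (x_to_y k t1) (x_to_y k t2)
  | t => t
  end.

Fixpoint first_x_only k (t : term) : term :=
  match t with
  | TRestrict s t => TRestrict s (first_x_only k t)
  | TRename b t => TRename b (first_x_only k t)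
  | TPar t1 t2 => if x_count t1 == 0 then TPar t1 (first_x_only k t2)
                  else TPar (first_x_only k t1) (x_to_y k t2)
  | t => t
  end.

Fixpoint first_x_to_y k (t : term) : term :=
  match t with
  | TX => TY A k
  | TRestrict s t => TRestrict s (first_x_to_y k t)
  | TRename b t => TRename b (first_x_to_y k t)
  | TPar t1 t2 => if x_count t1 == 0 then TPar t1 (first_x_to_y k t2)
                  else TPar (first_x_to_y k t1) t2
  | t => t
  end.

Lemma eval_upd_fresh x y k z t : y_bound t <= k -> eval x (upd_env y k z) t = eval x y t.
Proof.
elim: t => //= [i lt|s t IH /IH ->|b t IH /IH ->|t1 IH1 t2 IH2] //.
  by rewrite /upd_env ltn_eqF.
by rewrite geq_max => /andP[/IH1 -> /IH2 ->].
Qed.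

Section Substitution.
Variables (x z : graph) (y : nat -> graph) (k : nat).

Lemma eval_x_to_y t : y_bound t <= k -> eval x (upd_env y k z) (x_to_y k t) = eval z y t.
Proof.
elim: t => //= [_|i lt|s t IH /IH ->|b t IH /IH ->|t1 IH1 t2 IH2] //.
- by rewrite /upd_env eqxx.
- by rewrite /upd_env ltn_eqF.
by rewrite geq_max => /andP[/IH1 -> /IH2 ->].
Qed.

Lemma eval_first_x_to_y t :
  y_bound t <= k -> eval x (upd_env y k x) (first_x_to_y k t) = eval x y t.
Proof.
elim: t => //= [_|i lt|s t IH /IH ->|b t IH /IH ->|t1 IH1 t2 IH2] //.
- by rewrite /upd_env eqxx.
- by rewrite /upd_env ltn_eqF.
rewrite geq_max => /andP[b1 b2].
by case: eqP => _ /=; rewrite ?IH1 ?IH2 ?eval_upd_fresh.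
Qed.

Lemma eval_first_x_only t : y_bound t <= k ->
  eval x (upd_env y k z) (first_x_only k t) = eval z (upd_env y k x) (first_x_to_y k t).
Proof.
elim: t => //= [_|i lt|s t IH /IH ->|b t IH /IH ->|t1 IH1 t2 IH2] //.
- by rewrite /upd_env eqxx.
- by rewrite /upd_env ltn_eqF.
rewrite geq_max => /andP[b1 b2]; case: eqP => [c1|_] /=.
  by rewrite IH2 // (eval_upd_fresh x y z b1) (eval_upd_fresh z y x b1) (eval_x_free x z y c1).
by rewrite IH1 // eval_x_to_y // (eval_upd_fresh z y x b2).
Qed.

End Substitution.

Lemma x_count_x_to_y k t : x_count (x_to_y k t) = 0.
Proof. by elim: t => //= t1 -> t2 ->. Qed.

Lemma x_count_first_x_only k t : 0 < x_count t -> x_count (first_x_only k t) = 1.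
Proof.
elim: t => //= t1 IH1 t2 IH2; case: eqP => [c1|/eqP c1] /=.
  by rewrite c1 => /IH2.
by rewrite x_count_x_to_y addn0 IH1 // lt0n.
Qed.

Lemma x_count_first_x_to_y k t : x_count (first_x_to_y k t) = (x_count t).-1.
Proof.
elim: t => //= t1 IH1 t2 IH2; case: eqP => [c1|/eqP c1] /=; rewrite ?IH1 ?IH2 ?c1 //.
by move: c1; rewrite -lt0n; lia.
Qed.

Lemma term_G_x_to_y k t : term_G t -> term_G (x_to_y k t).
Proof. by elim: t => //= [b t IH [bb /IH]|t1 IH1 t2 IH2 [/IH1 h1 /IH2]]. Qed.

Lemma term_G_first_x_only k t : term_G t -> term_G (first_x_only k t).
Proof.
elim: t => //= [b t IH [bb /IH]|t1 IH1 t2 IH2 [h1 h2]] //.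
by case: eqP => _ /=; split; auto; apply: term_G_x_to_y.
Qed.

Lemma term_G_first_x_to_y k t : term_G t -> term_G (first_x_to_y k t).
Proof.
elim: t => //= [b t IH [bb /IH]|t1 IH1 t2 IH2 [h1 h2]] //.
by case: eqP => _ /=; split; auto.
Qed.

Lemma term_Gtau_G tau (t : term) : term_Gtau tau t -> term_G t.
Proof.
by elim: t => //= [s t IH [_ /IH]|b t IH [[bb _] /IH]|t1 IH1 t2 IH2 [/IH1 h1 /IH2]].
Qed.

End Terms.

Section Transfer.
Variables (A : Type) (L : graph A -> Prop) (tau : {fset nat}) (G1 G2 : graph A).
Hypotheses (L_sort0 : forall G, L G -> wf_graph G /\ gsort G = fset0)
  (L_iso : forall G H, wf_graph G -> wf_graph H -> iso G H -> L G -> L H)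
  (wG1 : wf_graph G1) (wG2 : wf_graph G2)
  (sG12 : gsort G1 = gsort G2) (sG1 : (gsort G1 `<=` tau)%fset)
  (L_Gtau : forall t, term_Gtau tau t -> forall y, (forall i, elem_Gtau tau (y i)) ->
     L (eval G1 y t) -> L (eval G2 y t)).

Lemma one_hole_transfer t y : term_G t -> x_count t = 1 -> (forall i, wf_graph (y i)) ->
  L (eval G1 y t) -> L (eval G2 y t).
Proof.
move=> ht c wy L1; have wE x : wf_graph x -> wf_graph (eval x y t) by move/(wf_eval ht); apply.
have [r [a [a' [C [aK a'K wC FE]]]]] := one_hole_nf (gsort G1) ht c wy.
have wN x : wf_graph x -> wf_graph (hole_nf r a C x) := wf_hole_nf r (can_inj aK) wC.
have LN1 : L (hole_nf r a C G1) := L_iso (wE _ wG1) (wN _ wG1) (FE _ wG1 erefl) L1.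
pose C' := g_restrict (gsort G1) (g_rename a' C).
have NE x : gsort x = gsort G1 -> hole_nf r a C x = g_restrict fset0 (g_par x C').
  move=> sx; rewrite /C' -sx; apply: hole_nf_closed => //; apply: gsort0_src_nil.
  by rewrite (gsort_hole_nf _ _ _ sx); apply: (L_sort0 LN1).2.
have LN2 : L (hole_nf r a C G2).
  rewrite NE -?sG12 //.
  apply: (@L_Gtau (TRestrict fset0 (TPar (TX A) (TY A 0))) _ (fun=> C')).
  - by split; [apply: fsub0set|].
  - move=> _; split; first by apply/wf_restrict/wf_rename => //; apply: can_inj a'K.
    apply: fsubset_trans _ sG1; apply/fsubsetP => l.
    by rewrite /C' in_gsort mem_labels_restrict => /andP[].
  - by rewrite NE in LN1.
exact: L_iso (wN _ wG2) (wE _ wG2) (iso_sym (wE _ wG2) (wN _ wG2) (FE _ wG2 (esym sG12))) LN2.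
Qed.

Lemma Gtau_transfer t y : term_G t -> (forall i, wf_graph (y i)) ->
  L (eval G1 y t) -> L (eval G2 y t).
Proof.
move: {2}(x_count t) (erefl (x_count t)) => n.
elim: n t y => [|n IH] t y ct ht wy L1; first by rewrite -(eval_x_free G1 G2 y ct).
set k := y_bound t.
have wyk z : wf_graph z -> forall i, wf_graph (upd_env y k z i).
  by move=> wz i; rewrite /upd_env; case: eqP.
have L2 : L (eval G2 (upd_env y k G1) (first_x_only k t)).
  apply: one_hole_transfer; rewrite ?x_count_first_x_only ?ct //.
  - exact: term_G_first_x_only.
  - exact: wyk.
  by rewrite eval_first_x_only // eval_first_x_to_y.
rewrite eval_first_x_only // in L2.
have := IH _ _ _ (term_G_first_x_to_y k ht) (wyk _ wG2) L2.
by rewrite eval_first_x_to_y //; apply; rewrite x_count_first_x_to_y ct.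
Qed.

End Transfer.

Theorem lemma7p3 (A : Type) (L : graph A -> Prop) (tau : {fset nat})
  (G1 G2 : graph A) :
  (forall G, L G -> wf_graph G /\ gsort G = fset0) ->
  (forall G H, wf_graph G -> wf_graph H -> iso G H -> L G -> L H) ->
  wf_graph G1 -> wf_graph G2 ->
  (gsort G1 `<=` tau)%fset -> (gsort G2 `<=` tau)%fset ->
  (syn_cong (@term_G A) (@elem_G A) L G1 G2 <->
   syn_cong (term_Gtau tau) (elem_Gtau tau) L G1 G2).
Proof.
move=> L_sort0 L_iso wG1 wG2 sG1 sG2; split=> -[sG12 cong]; split=> // t ht y wy.
  by apply: cong (term_Gtau_G ht) _ _ => i; case: (wy i).
have transfer G G' : wf_graph G -> wf_graph G' -> gsort G = gsort G' ->
    (gsort G `<=` tau)%fset ->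
    (forall t', term_Gtau tau t' -> forall y', (forall i, elem_Gtau tau (y' i)) ->
       L (eval G y' t') -> L (eval G' y' t')) ->
    L (eval G y t) -> L (eval G' y t).
  by move=> wG wG' sGG' sG L_Gtau; apply: Gtau_transfer L_Gtau t y ht wy.
split; apply: transfer => // t' ht' y' wy'; first by case: (cong t' ht' y' wy').
by case: (cong t' ht' y' wy').
Qed.
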